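(* Assume $\|\hat F'(y)-\hat F'(x)\|_F\le L_{\hat F}\|y-x\|$ for all $x,y\in\mathcal F$ and that $\sigma_{\min}(\hat F'(x)^* )\ge\sqrt\mu$ for all $x\in\mathcal F$, some $\mu>0$. Let $\{x_k\}$ be computed by Scheme 1 in which $x_{k+1}$ is given by $$x_{k+1}=x_k-\eta_k\big(\hat F'(x_k)^*\hat F'(x_k)+\tau_kL_kI_n\big)^{-1}\hat F'(x_k)^*\hat F(x_k),$$ with $\tau_k>0$ and $\eta_k\in(0,2)$. Then for $k\in\mathbb Z_+$: $$\hat f_1(x_{k+1})\le\frac{\tau_k}{2}+\begin{cases}\frac{\hat f_2(x_k)}{2\tau_k}\Big(1-\frac{\eta_k(2-\eta_k)\mu}{L_k\tau_k+\mu}\Big),&\tau_k\ge\frac{\mu}{L_k},\\ \frac{\hat f_2(x_k)(1-\eta_k)^2}{2\tau_k}+\frac{\eta_k(2-\eta_k)L_k\hat f_2(x_k)}{2\mu}-\frac{\eta_k(2-\eta_k)L_k^2\hat f_2(x_k)\tau_k}{2\mu^2(1+\xi)^3}&\text{for some }\xi\in(-1,1],\ \text{if }\tau_k<\frac{\mu}{L_k}.\end{cases}$$ Moreover, if $\eta_k=1$ for all $k$, then $\hat f_1(x_{k+1})\le\frac{\tau_k}{2}+\frac{L_{\hat F}}{\mu}\hat f_2(x_k)$.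
   Context: Let $F:\mathbb R^n\to\mathbb R^m$ be smooth, $\hat F=\frac1{\sqrt m}F$ with Jacobian $\hat F'(x)$ and its transpose $\hat F'(x)^*$; Euclidean norms, $\|\cdot\|_F$ Frobenius norm. $\hat f_1(x)=\|\hat F(x)\|$, $\hat f_2=\hat f_1^2$, $\psi_{x,L,\tau}(y)=\frac\tau2+\frac{\|\hat F(x)+\hat F'(x)(y-x)\|^2}{2\tau}+\frac L2\|y-x\|^2$. $\mathcal F$ closed convex with nonempty interior, $\mathcal L(\hat f_1(x_0))\subseteq\mathcal F$ and the generated sequence stays in $\mathcal F$. Scheme 1 (as used here, with $x_{k+1}$ given by the displayed formula): input $x_0$, $L\in(0,L_{\hat F}]$, $L_0=L$; at iteration $k$ choose $\tau_k$, compute $x_{k+1}$; if $\hat f_1(x_{k+1})>\psi_{x_k,L_k,\tau_k}(x_{k+1})$, set $L_k:=\min\{2L_k,2L_{\hat F}\}$ and recompute; otherwise $L_{k+1}=\max\{L_k/2,L\}$. *)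

From HB Require Import structures.
From mathcomp Require Import all_boot all_order all_algebra.
From mathcomp Require Import all_classical all_reals all_analysis.
Set Implicit Arguments. Unset Strict Implicit. Unset Printing Implicit Defensive.
Import Order.TTheory GRing.Theory Num.Theory.
Import numFieldNormedType.Exports.
Local Open Scope classical_set_scope.
Local Open Scope ring_scope.

(* Points of R^n are row vectors 'rV[R]_n (the convention of MathComp-Analysis'
   [jacobian]); linear algebra is written with column vectors via transposes. *)

Definition fro (R : realType) (p q : nat) (A : 'M[R]_(p, q)) : R :=
  Num.sqrt (\sum_(i < p) \sum_(j < q) A i j ^+ 2).

Definition sigma_min (R : realType) (p q : nat) (A : 'M[R]_(p, q)) : R :=
  inf [set fro (A *m v) | v in [set v : 'cV[R]_q | fro v = 1]].

Definition hatF (R : realType) (n m : nat) (F : 'rV[R]_n -> 'rV[R]_m) :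
  'rV[R]_n -> 'rV[R]_m := fun x => (Num.sqrt (m%:R))^-1 *: F x.

(* The (standard, m x n) Jacobian matrix G'(x) of G : R^n -> R^m.
   MathComp-Analysis' [jacobian G x] is its transpose (h *m jacobian G x = dG(x) h). *)
Definition Jmx (R : realType) (n m : nat) (G : 'rV[R]_n -> 'rV[R]_m) (x : 'rV[R]_n)
  : 'M[R]_(m, n) := (jacobian G x)^T.

Definition f1 (R : realType) (n m : nat) (G : 'rV[R]_n -> 'rV[R]_m) x : R := fro (G x).
Definition f2 (R : realType) (n m : nat) (G : 'rV[R]_n -> 'rV[R]_m) x : R := (f1 G x) ^+ 2.

Definition psi (R : realType) (n m : nat) (G : 'rV[R]_n -> 'rV[R]_m)
  (x : 'rV[R]_n) (L tau : R) (y : 'rV[R]_n) : R :=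
  tau / 2 + fro ((G x)^T + Jmx G x *m (y - x)^T) ^+ 2 / (2 * tau)
  + L / 2 * fro (y - x) ^+ 2.

Definition trial (R : realType) (n m : nat) (G : 'rV[R]_n -> 'rV[R]_m)
  (x : 'rV[R]_n) (L tau eta : R) : 'rV[R]_n :=
  x - eta *: (invmx ((Jmx G x)^T *m Jmx G x + (tau * L)%:M)
                *m (Jmx G x)^T *m (G x)^T)^T.

Definition Lup (R : realType) (LG : R) (t : R) : R := Num.min (2 * t) (2 * LG).

(* {x_k} computed by Scheme 1 (with the above x_{k+1}), with accepted constants
   Lacc k (the final value of L_k at iteration k), step sizes tau k, eta k.
   L0 k is the value of L_k at the start of iteration k; j is the number of
   failed tests (each followed by a doubling and recomputation). *)
Definition scheme1 (R : realType) (n m : nat) (G : 'rV[R]_n -> 'rV[R]_m)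
  (LG L : R) (x : nat -> 'rV[R]_n) (Lacc tau eta : nat -> R) : Prop :=
  exists L0 : nat -> R,
    L0 0%N = L /\
    forall k : nat,
      (exists j : nat,
         Lacc k = iter j (Lup LG) (L0 k) /\
         (forall i : nat, (i < j)%N ->
            f1 G (trial G (x k) (iter i (Lup LG) (L0 k)) (tau k) (eta k))
            > psi G (x k) (iter i (Lup LG) (L0 k)) (tau k)
                (trial G (x k) (iter i (Lup LG) (L0 k)) (tau k) (eta k)))) /\
      x k.+1 = trial G (x k) (Lacc k) (tau k) (eta k) /\
      f1 G (x k.+1) <= psi G (x k) (Lacc k) (tau k) (x k.+1) /\
      L0 k.+1 = Num.max (Lacc k / 2) L.

(* The acceptance test of Scheme 1 gives f1(x_{k+1}) <= psi_{x_k,L_k,tau_k}(x_{k+1}),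
   so everything reduces to evaluating psi at the Levenberg-Marquardt trial
   point.  With r = F(x_k), J = F'(x_k), c = tau_k L_k and
   p = (J^T J + c I)^-1 J^T r one has
     2 tau (psi - tau/2) = |r - eta J p|^2 + c eta^2 |p|^2
                         = |r|^2 - eta (2 - eta) <r, J p>,
   and the residual s = r - J p solves (J J^T + c I) s = c r; together with
   sigma_min(J^T)^2 >= mu this yields <r, J p> >= mu / (c + mu) |r|^2.  The other
   two bounds are elementary comparisons with this one: for tau_k < mu / L_k the
   choice xi = 1 works, and for eta = 1 one uses L_k <= 2 L_F, which holds by the
   update rule. *)

From HB Require Import structures.
From mathcomp Require Import all_boot all_order all_algebra.
From mathcomp Require Import all_classical all_reals all_analysis.
From mathcomp Require Import ring lra.
Import Order.TTheory GRing.Theory Num.Theory.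
Import numFieldNormedType.Exports.
Local Open Scope classical_set_scope.
Local Open Scope ring_scope.
Set Implicit Arguments. Unset Strict Implicit. Unset Printing Implicit Defensive.

Section Dot.
Variable R : realFieldType.

Definition dot (q : nat) (u v : 'cV[R]_q) : R := (u^T *m v) 0 0.

Lemma dotC q (u v : 'cV[R]_q) : dot u v = dot v u.
Proof. by rewrite /dot -[u^T *m v]trmxK trmx_mul trmxK mxE. Qed.

Lemma dotDr q (w u v : 'cV[R]_q) : dot w (u + v) = dot w u + dot w v.
Proof. by rewrite /dot mulmxDr mxE. Qed.

Lemma dotBr q (w u v : 'cV[R]_q) : dot w (u - v) = dot w u - dot w v.
Proof. by rewrite /dot mulmxBr !mxE. Qed.

Lemma dotZr q a (w u : 'cV[R]_q) : dot w (a *: u) = a * dot w u.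
Proof. by rewrite /dot -scalemxAr mxE. Qed.

Lemma dotBl q (w u v : 'cV[R]_q) : dot (u - v) w = dot u w - dot v w.
Proof. by rewrite !(dotC _ w) dotBr. Qed.

Lemma dotZl q a (w u : 'cV[R]_q) : dot (a *: u) w = a * dot u w.
Proof. by rewrite !(dotC _ w) dotZr. Qed.

Lemma dotNl q (w u : 'cV[R]_q) : dot (- u) w = - dot u w.
Proof. by rewrite -scaleN1r dotZl mulN1r. Qed.

Lemma dotNr q (w u : 'cV[R]_q) : dot w (- u) = - dot w u.
Proof. by rewrite dotC dotNl dotC. Qed.

Lemma dot0r q (u : 'cV[R]_q) : dot u 0 = 0.
Proof. by rewrite /dot mulmx0 mxE. Qed.

Lemma dot_mulmx p q (M : 'M[R]_(p, q)) (u : 'cV_p) (v : 'cV_q) :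
  dot u (M *m v) = dot (M^T *m u) v.
Proof. by rewrite /dot trmx_mul trmxK mulmxA. Qed.

Lemma dotvvE q (u : 'cV[R]_q) : dot u u = \sum_i u i 0 ^+ 2.
Proof. by rewrite /dot mxE; apply: eq_bigr => i _; rewrite mxE expr2. Qed.

Lemma dotvv_ge0 q (u : 'cV[R]_q) : 0 <= dot u u.
Proof. by rewrite dotvvE sumr_ge0 // => i _; rewrite sqr_ge0. Qed.

Lemma dotvv_eq0 q (u : 'cV[R]_q) : (dot u u == 0) = (u == 0).
Proof.
apply/idP/eqP => [|->]; last by rewrite dot0r.
rewrite dotvvE psumr_eq0 => [/allP u0|i _]; last exact: sqr_ge0.
apply/matrixP => i j; rewrite ord1 mxE.
by apply/eqP; rewrite -sqrf_eq0; apply: u0; rewrite mem_index_enum.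
Qed.

(* Expand [0 <= |c r - k s|^2]. *)
Lemma dot_le_of_sqr_le q (k c : R) (r s : 'cV[R]_q) : 0 < k -> 0 < c ->
  k * dot s s <= c * dot r s -> k * dot r s <= c * dot r r.
Proof.
move=> k_gt0 c_gt0 ks_le.
have := dotvv_ge0 (c *: r - k *: s).
rewrite !(dotBl, dotBr, dotZl, dotZr) (dotC s r) => sq_ge0.
have : 0 <= c * (c * dot r r - k * dot r s).
  by have := ler_wpM2l (ltW k_gt0) ks_le; nra.
by rewrite pmulr_rge0 // subr_ge0.
Qed.

End Dot.

Section GramShift.
Variables (R : realFieldType) (q m : nat) (J : 'M[R]_(m, q)).

Lemma dot_gram_shift (c : R) (v : 'cV[R]_q) :
  dot v ((J^T *m J + c%:M) *m v) = dot (J *m v) (J *m v) + c * dot v v.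
Proof. by rewrite mulmxDl mul_scalar_mx dotDr dotZr -mulmxA dot_mulmx trmxK. Qed.

Lemma gram_shift_unit (c : R) : 0 < c -> J^T *m J + c%:M \in unitmx.
Proof.
move=> c_gt0; rewrite unitmxE unitfE; apply/det0P => -[v v_neq0 vA].
have A_sym : (J^T *m J + c%:M)^T = J^T *m J + c%:M.
  by rewrite linearD /= trmx_mul trmxK tr_scalar_mx.
have Av : (J^T *m J + c%:M) *m v^T = 0 by rewrite -{1}A_sym -trmx_mul vA trmx0.
have := dot_gram_shift c v^T; rewrite Av dot0r => /esym/eqP.
rewrite paddr_eq0 ?dotvv_ge0 ?mulr_ge0 ?dotvv_ge0 ?ltW // => /andP[_].
by rewrite mulf_eq0 gt_eqF //= dotvv_eq0 trmx_eq0 (negPf v_neq0).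
Qed.

End GramShift.

Section LevenbergMarquardtStep.
Variables (R : realFieldType) (q m : nat) (J : 'M[R]_(m, q)).

Definition lm_step (c : R) (r : 'cV[R]_m) : 'cV[R]_q :=
  invmx (J^T *m J + c%:M) *m J^T *m r.

Variables (c : R) (r : 'cV[R]_m).
Hypothesis c_gt0 : 0 < c.
Local Notation p := (lm_step c r).

Lemma lm_step_normal : (J^T *m J + c%:M) *m p = J^T *m r.
Proof. by rewrite /lm_step mulmxA mulKVmx // gram_shift_unit. Qed.

Lemma lm_step_dot : dot (J *m p) (J *m p) + c * dot p p = dot r (J *m p).
Proof. by rewrite -dot_gram_shift lm_step_normal dot_mulmx trmxK dotC. Qed.

Lemma lm_model_sqr (e : R) :
  dot (r - e *: (J *m p)) (r - e *: (J *m p)) + c * e ^+ 2 * dot p p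
  = dot r r - e * (2 - e) * dot r (J *m p).
Proof.
rewrite !(dotBl, dotBr, dotZl, dotZr) (dotC (J *m p) r) -lm_step_dot; ring.
Qed.

Lemma lm_residual_eq : (J *m J^T + c%:M) *m (r - J *m p) = c *: r.
Proof.
have JA : (J *m J^T + c%:M) *m (J *m p) = J *m ((J^T *m J + c%:M) *m p).
  by rewrite !mulmxDl mulmxDr !mul_scalar_mx scalemxAr !mulmxA.
by rewrite mulmxBr JA lm_step_normal mulmxDl mul_scalar_mx mulmxA addrC addKr.
Qed.

Lemma lm_step_correlation (mu : R) : 0 < mu ->
  (forall s : 'cV_m, mu * dot s s <= dot (J^T *m s) (J^T *m s)) ->
  mu / (c + mu) * dot r r <= dot r (J *m p).
Proof.
move=> mu_gt0 J_lb; set s := r - J *m p.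
have k_gt0 : 0 < mu + c by rewrite addr_gt0.
have s_bound : (mu + c) * dot s s <= c * dot r s.
  have := dot_gram_shift J^T c s; rewrite trmxK lm_residual_eq dotZr dotC.
  by move=> ->; rewrite mulrDl lerD2r J_lb.
have rs_bound := dot_le_of_sqr_le k_gt0 c_gt0 s_bound.
have -> : dot r (J *m p) = dot r r - dot r s by rewrite dotBr opprB addrC subrK.
rewrite mulrAC ler_pdivrMr ?addr_gt0 //; nra.
Qed.

Lemma lm_model_decrease (e mu : R) : 0 < mu -> 0 <= e * (2 - e) ->
  (forall s : 'cV_m, mu * dot s s <= dot (J^T *m s) (J^T *m s)) ->
  dot (r - e *: (J *m p)) (r - e *: (J *m p)) + c * e ^+ 2 * dot p p
  <= dot r r * (1 - e * (2 - e) * mu / (c + mu)).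
Proof.
move=> mu_gt0 e_ge0 J_lb; rewrite lm_model_sqr.
have := ler_wpM2l e_ge0 (lm_step_correlation mu_gt0 J_lb).
by rewrite [dot r r * _]mulrC mulrBl mul1r lerD2l lerN2 -!mulrA.
Qed.

End LevenbergMarquardtStep.

Section Frobenius.
Variable R : realType.

Lemma fro_ge0 p q (A : 'M[R]_(p, q)) : 0 <= fro A.
Proof. exact: sqrtr_ge0. Qed.

Lemma fro_tr p q (A : 'M[R]_(p, q)) : fro A^T = fro A.
Proof.
rewrite /fro exchange_big /=; congr Num.sqrt.
by apply: eq_bigr => i _; apply: eq_bigr => j _; rewrite mxE.
Qed.

Lemma froZ p q a (A : 'M[R]_(p, q)) : fro (a *: A) = `|a| * fro A.
Proof.
rewrite /fro -sqrtr_sqr -sqrtrM ?sqr_ge0 //; congr Num.sqrt.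
rewrite mulr_sumr; apply: eq_bigr => i _; rewrite mulr_sumr.
by apply: eq_bigr => j _; rewrite mxE exprMn.
Qed.

Lemma fro_sqr_dot q (u : 'cV[R]_q) : fro u ^+ 2 = dot u u.
Proof.
rewrite sqr_sqrtr; last by do 2 (apply: sumr_ge0 => ? _); exact: sqr_ge0.
by rewrite dotvvE; apply: eq_bigr => i _; rewrite big_ord1.
Qed.

Lemma sigma_min_mulmx_le p q (M : 'M[R]_(p, q)) (v : 'cV[R]_q) :
  sigma_min M * fro v <= fro (M *m v).
Proof.
have [v0|v_neq0] := eqVneq (fro v) 0; first by rewrite v0 mulr0 fro_ge0.
have v_gt0 : 0 < fro v by rewrite lt_def v_neq0 fro_ge0.
have lb : has_lbound [set fro (M *m w) | w in [set w : 'cV[R]_q | fro w = 1]].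
  by exists 0 => _ [w _ <-]; exact: fro_ge0.
have unit_v : fro ((fro v)^-1 *: v) = 1.
  by rewrite froZ ger0_norm ?invr_ge0 ?fro_ge0 // mulVf.
have := ge_inf lb (ex_intro2 _ _ _ unit_v erefl).
rewrite -/(sigma_min M) -scalemxAr froZ ger0_norm ?invr_ge0 ?fro_ge0 //.
by rewrite -ler_pdivlMr // mulrC.
Qed.

Lemma sigma_min_sqr_le p q (M : 'M[R]_(p, q)) (mu : R) : 0 <= mu ->
  Num.sqrt mu <= sigma_min M -> forall v, mu * dot v v <= dot (M *m v) (M *m v).
Proof.
move=> mu_ge0 mu_le v; rewrite -!fro_sqr_dot -[mu]sqr_sqrtr // -exprMn.
rewrite ler_sqr ?nnegrE ?mulr_ge0 ?sqrtr_ge0 ?fro_ge0 //.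
exact: le_trans (ler_wpM2r (fro_ge0 v) mu_le) (sigma_min_mulmx_le M v).
Qed.

End Frobenius.

Definition lm_bound (R : realFieldType) (f t L e mu : R) : R :=
  t / 2 + f / (2 * t) * (1 - e * (2 - e) * mu / (L * t + mu)).

Lemma psi_trial_le (R : realType) n m (G : 'rV[R]_n -> 'rV[R]_m) (x : 'rV_n)
    (L t e mu : R) :
  0 < L -> 0 < t -> 0 < mu -> 0 <= e * (2 - e) ->
  Num.sqrt mu <= sigma_min (Jmx G x)^T ->
  psi G x L t (trial G x L t e) <= lm_bound (f2 G x) t L e mu.
Proof.
move=> L_gt0 t_gt0 mu_gt0 e_ge0 sigma_ge.
set J := Jmx G x; set r := (G x)^T; set p := lm_step J (t * L) r.
have step : (trial G x L t e - x)^T = - (e *: p).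
  by rewrite /trial addrC addKr linearN /= linearZ /= trmxK.
have := lm_model_decrease r (mulr_gt0 t_gt0 L_gt0) mu_gt0 e_ge0
  (sigma_min_sqr_le (ltW mu_gt0) sigma_ge).
rewrite /psi /lm_bound /f2 /f1 -[fro (G x)]fro_tr -[fro (_ - x)]fro_tr step.
rewrite !fro_sqr_dot -/r -/J mulmxN -scalemxAr (mulrC L t) => decr.
rewrite -addrA lerD2l.
rewrite [X in X <= _](_ : _ = (dot (r - e *: (J *m p)) (r - e *: (J *m p))
    + t * L * e ^+ 2 * dot p p) / (2 * t)).
  by rewrite [X in _ <= X]mulrAC ler_wpM2r // invr_ge0 mulr_ge0 // ltW.
rewrite dotNl dotNr opprK dotZl dotZr; field; exact: lt0r_neq0.
Qed.

Lemma iter_Lup_bound (R : realType) (LG t : R) j :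
  0 < LG -> 0 < t <= 2 * LG -> 0 < iter j (Lup LG) t <= 2 * LG.
Proof.
move=> LG_gt0 /andP[t_gt0 t_le]; elim: j => [|j /andP[IH1 IH2]] /=.
  by rewrite t_gt0.
by rewrite /Lup lt_min ge_min lexx orbT andbT !mulr_gt0.
Qed.

Section Scheme1.
Variables (R : realType) (n m : nat) (G : 'rV[R]_n -> 'rV[R]_m) (LG L : R).
Variables (x : nat -> 'rV[R]_n) (Lacc tau eta : nat -> R).
Hypothesis scheme : scheme1 G LG L x Lacc tau eta.

Lemma scheme1_Lacc_bound : 0 < L -> L <= LG -> forall k, 0 < Lacc k <= 2 * LG.
Proof.
move=> L_gt0 L_le; have [L0 [L00 iteration]] := scheme.
have LG_gt0 : 0 < LG by apply: lt_le_trans L_le.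
have Lacc_of k : 0 < L0 k <= LG -> 0 < Lacc k <= 2 * LG.
  move=> /andP[L0_gt0 L0_le]; have [[j [-> _]] _] := iteration k.
  by apply: iter_Lup_bound => //; rewrite L0_gt0 /=; lra.
suff L0_bound k : 0 < L0 k <= LG by move=> k; exact: Lacc_of.
elim: k => [|k IH]; first by rewrite L00 L_gt0.
have [_ [_ [_ ->]]] := iteration k; have /andP[Lk_gt0 Lk_le] := Lacc_of k IH.
by rewrite lt_max ge_max L_gt0 orbT L_le !andbT; lra.
Qed.

Lemma scheme1_accepted k :
  f1 G (x k.+1) <= psi G (x k) (Lacc k) (tau k) (trial G (x k) (Lacc k) (tau k) (eta k)).
Proof. by have [_ [_ /(_ k) [_ [<- [accepted _]]]]] := scheme. Qed.

End Scheme1.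

(* The case-2 bound with [xi = 1] dominates [lm_bound] as soon as [L t < mu]:
   their difference is [f e (2 - e) L^2 t (7 mu - L t) / (16 mu^2 (L t + mu))]. *)
Lemma lm_bound_le_small_tau (R : realFieldType) (f e t L mu : R) :
  0 <= f -> 0 < e < 2 -> 0 < t -> 0 < L -> 0 < mu -> L * t < mu ->
  lm_bound f t L e mu <=
  t / 2 + (f * (1 - e) ^+ 2 / (2 * t) + e * (2 - e) * L * f / (2 * mu)
           - e * (2 - e) * L ^+ 2 * f * t / (2 * mu ^+ 2 * (1 + 1) ^+ 3)).
Proof.
move=> f_ge0 /andP[e_gt0 e_lt2] t_gt0 L_gt0 mu_gt0 Lt_lt.
rewrite /lm_bound lerD2l -subr_ge0.
have Ltmu_neq0 : L * t + mu != 0 by rewrite lt0r_neq0 // addr_gt0 ?mulr_gt0.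
rewrite [X in 0 <= X](_ : _ = f * (e * (2 - e)) * L * (L * t) * (7 * mu - L * t)
                              / (16 * mu ^+ 2 * (L * t + mu))); last first.
  by field; rewrite Ltmu_neq0 /= ?lt0r_neq0.
apply: divr_ge0; last by rewrite !mulr_ge0 ?exprn_ge0 ?addr_ge0 ?mulr_ge0 // ltW.
by rewrite !mulr_ge0 // ?ltW ?subr_ge0 ?mulr_gt0 //; lra.
Qed.

Lemma lm_bound_unit_step_le (R : realFieldType) (f t L LG mu : R) :
  0 <= f -> 0 < t -> 0 < L -> 0 < mu -> L <= 2 * LG ->
  lm_bound f t L 1 mu <= t / 2 + LG / mu * f.
Proof.
move=> f_ge0 t_gt0 L_gt0 mu_gt0 L_le.
rewrite /lm_bound lerD2l -subr_ge0.
have Ltmu_neq0 : L * t + mu != 0 by rewrite lt0r_neq0 // addr_gt0 ?mulr_gt0.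
rewrite [X in 0 <= X](_ : _ = f * (2 * LG * (L * t + mu) - L * mu)
                              / (2 * mu * (L * t + mu))); last first.
  by field; rewrite Ltmu_neq0 /= ?lt0r_neq0.
apply: divr_ge0; last by rewrite !mulr_ge0 ?addr_ge0 ?mulr_ge0 // ltW.
by apply: mulr_ge0 => //; nra.
Qed.

Theorem theorem5 (R : realType) (n m : nat) (F : 'rV[R]_n -> 'rV[R]_m)
  (Fset : set 'rV[R]_n) (LF L mu : R)
  (x : nat -> 'rV[R]_n) (Lacc tau eta : nat -> R) :
  (forall y, differentiable F y) ->
  closed Fset -> convex_set Fset -> interior Fset !=set0 ->
  [set y | f1 (hatF F) y <= f1 (hatF F) (x 0%N)] `<=` Fset ->
  (forall k, Fset (x k)) ->
  (forall y z, Fset y -> Fset z ->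
     fro (Jmx (hatF F) z - Jmx (hatF F) y) <= LF * fro (z - y)) ->
  0 < mu ->
  (forall y, Fset y -> Num.sqrt mu <= sigma_min (Jmx (hatF F) y)^T) ->
  0 < L -> L <= LF ->
  (forall k, 0 < tau k) ->
  (forall k, 0 < eta k < 2) ->
  scheme1 (hatF F) LF L x Lacc tau eta ->
  (forall k : nat,
     (mu / Lacc k <= tau k ->
        f1 (hatF F) (x k.+1) <= tau k / 2 +
          f2 (hatF F) (x k) / (2 * tau k)
          * (1 - eta k * (2 - eta k) * mu / (Lacc k * tau k + mu))) /\
     (tau k < mu / Lacc k ->
        exists xi : R, -1 < xi <= 1 /\
          f1 (hatF F) (x k.+1) <= tau k / 2 +
            (f2 (hatF F) (x k) * (1 - eta k) ^+ 2 / (2 * tau k)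
             + eta k * (2 - eta k) * Lacc k * f2 (hatF F) (x k) / (2 * mu)
             - eta k * (2 - eta k) * Lacc k ^+ 2 * f2 (hatF F) (x k) * tau k
               / (2 * mu ^+ 2 * (1 + xi) ^+ 3)))) /\
  ((forall k, eta k = 1) ->
     forall k : nat,
       f1 (hatF F) (x k.+1) <= tau k / 2 + LF / mu * f2 (hatF F) (x k)).
Proof.
move=> _ _ _ _ _ x_in _ mu_gt0 sigma_ge L_gt0 L_le tau_gt0 eta_bd scheme.
have Lacc_bd := scheme1_Lacc_bound scheme L_gt0 L_le.
have f2_ge0 k : 0 <= f2 (hatF F) (x k) by exact: sqr_ge0.
have descent k : f1 (hatF F) (x k.+1)
    <= lm_bound (f2 (hatF F) (x k)) (tau k) (Lacc k) (eta k) mu.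
  apply: le_trans (scheme1_accepted scheme k) _.
  have /andP[e_gt0 e_lt2] := eta_bd k; have /andP[Lk_gt0 _] := Lacc_bd k.
  by apply: psi_trial_le => //; [rewrite mulr_ge0 //; lra | exact: sigma_ge (x_in k)].
split=> [k|eta1 k]; have /andP[Lk_gt0 Lk_le] := Lacc_bd k.
  split=> [_|tau_lt]; first exact: descent.
  exists 1; split; first by rewrite lexx andbT; lra.
  apply: le_trans (descent k) (lm_bound_le_small_tau _ _ _ _ _ _) => //.
  by rewrite mulrC -ltr_pdivlMr.
by have := descent k; rewrite eta1 => /le_trans; apply; exact: lm_bound_unit_step_le.
Qed.
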